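(* Let $\{c_k\}_{k\ge1}$ be i.i.d. random variables whose common distribution is absolutely continuous on $[0,1]$ with almost everywhere positive and uniformly bounded density, let $\lambda>0$ and $l_k=e^{-\lambda k}$, and let $q(n)=\lfloor\log_2(\log n)\rfloor$. Then almost surely the following holds: for every $\varepsilon>0$, for all sufficiently large $n$ and all $i\ne j$ in $\mathcal{A}_{n,q(n)}$, $\frac{l_i+l_j}{2|c_i-c_j|}<\varepsilon$.
   Context: $\mathcal{A}_n=\{n,\dots,2n-1\}$ and $\mathcal{A}_{n,q}=\mathcal{A}_n\cup\mathcal{A}_{2n}\cup\cdots\cup\mathcal{A}_{2^qn}$. *)

From HB Require Import structures.
From mathcomp Require Import all_boot all_order all_algebra.
From mathcomp Require Import all_classical all_reals all_analysis.
Set Implicit Arguments. Unset Strict Implicit. Unset Printing Implicit Defensive.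
Import Order.TTheory GRing.Theory Num.Theory.
Local Open Scope classical_set_scope.
Local Open Scope ring_scope.

Definition inA (n k : nat) : Prop := (n <= k < 2 * n)%N.

Definition inAq (n q k : nat) : Prop := exists m : nat, (m <= q)%N /\ inA (2 ^ m * n) k.

(* q(n) = floor(log_2(log n)); only relevant for large n where the value is >= 0 *)
Definition qn {R : realType} (n : nat) : nat :=
  Num.truncn (ln (ln (n%:R : R)) / ln 2).

Definition lk {R : realType} (lam : R) (k : nat) : R := expR (- (lam * k%:R)).

Definition mutually_independent {R : realType} {d : measure_display}
  {T : measurableType d} (P : probability T R) (X : nat -> T -> R) : Prop :=
  forall (n : nat) (B : nat -> set R), (forall i, measurable (B i)) ->
    P (\bigcap_(i in [set i | (i < n)%N]) (X i @^-1` B i)) =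
    (\prod_(i < n) P (X i @^-1` B i))%E.

Definition has_density_01 {R : realType} {d : measure_display}
  {T : measurableType d} (P : probability T R) (X : T -> R) (f : R -> R) : Prop :=
  forall B : set R, measurable B ->
    P (X @^-1` B) = (\int[lebesgue_measure]_(x in B `&` `[0%R, 1%R]) (f x)%:E)%E.

From HB Require Import structures.
From mathcomp Require Import all_boot all_order all_algebra.
From mathcomp Require Import all_classical all_reals all_analysis.
From mathcomp Require Import measurable_realfun.
From mathcomp Require Import lra ring zify.
Import Order.TTheory GRing.Theory Num.Theory.
Local Open Scope classical_set_scope.
Local Open Scope ring_scope.

(* Slicing [0,1] into cells of width del and using independence and the bound M
   on the density gives P(|c_i - c_j| <= del) <= 3 M^2 (del + del^2) for i <> j.
   Since 2^q(n) <= log n <= n, the set A_{n,q(n)} lies in [n, 2n^2), and the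
   probability that two of the first 2n^2 variables are within (m+1) e^{-lam n}
   is O(n^4 e^{-lam n}), a summable bound.  By Borel-Cantelli, almost surely for
   every m these gaps eventually all exceed (m+1) e^{-lam n} >= (m+1)(l_i + l_j)/2,
   so the ratio is eventually below 1/(m+1). *)

Section density_bounds.
Context {R : realType} {d : measure_display} {T : measurableType d}.
Context {P : probability T R} {X : T -> R} {f : R -> R} {M : R}.
Hypothesis X_density : has_density_01 P X f.

Lemma prob_notin01 : P (X @^-1` ~` `[0%R, 1%R]) = 0%E.
Proof.
rewrite X_density; last exact: measurableC (measurable_itv _).
by rewrite setICl integral_set0.
Qed.

Hypotheses (mf : measurable_fun setT f) (fM : forall x, 0 <= f x <= M).

Lemma prob_itv_le (a b : R) : a <= b -> (P (X @^-1` `[a, b]) <= (M * (b - a))%:E)%E.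
Proof.
move=> ab; rewrite X_density; last exact: measurable_itv.
have f_ge0 x : (0 <= (f x)%:E)%E by rewrite lee_fin; case/andP: (fM x).
have mfE : measurable_fun `[a, b] (EFin \o f).
  by apply/measurable_EFinP; exact: measurable_funS mf.
apply: (le_trans (ge0_subset_integral _ _ _ _ _ (@subIsetl _ _ _))) => //.
  by apply: measurableI; exact: measurable_itv.
apply: (le_trans (ge0_le_integral _ _ _ _ (f2 := cst M%:E) _ _)) => //.
  by move=> x _; rewrite lee_fin; case/andP: (fM x).
rewrite integral_cst /= ?lebesgue_measure_itv /=; last exact: measurable_itv.
case: ifPn => [_|]; first by rewrite -EFinM.
by rewrite lte_fin -leNgt => ba; rewrite (@le_anti _ _ a b) ?ab // subrr mulr0 mule0.
Qed.

End density_bounds.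

Lemma mutually_independent_pair {R : realType} {d : measure_display}
    {T : measurableType d} (P : probability T R) (Y : nat -> T -> R)
    (a b : nat) (A B : set R) :
  mutually_independent P Y -> a != b -> measurable A -> measurable B ->
  P (Y a @^-1` A `&` Y b @^-1` B) = (P (Y a @^-1` A) * P (Y b @^-1` B))%E.
Proof.
move=> Y_indep ab mA mB.
pose E t := if t == a then A else if t == b then B else setT.
have mE t : measurable (E t) by rewrite /E; case: ifP => // _; case: ifP.
have Ea : E a = A by rewrite /E eqxx.
have Eb : E b = B by rewrite /E eq_sym (negbTE ab) eqxx.
have an : (a < (maxn a b).+1)%N by rewrite ltnS leq_maxl.
have bn : (b < (maxn a b).+1)%N by rewrite ltnS leq_maxr.
have := Y_indep (maxn a b).+1 E mE.
rewrite (bigD1 (Ordinal an)) //= (bigD1 (Ordinal bn)) //=; last first.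
  by rewrite -val_eqE /= eq_sym.
rewrite big1 ?mule1 => [|t /andP[ta tb]]; last first.
  rewrite /E -!val_eqE /= in ta tb *.
  by rewrite (negbTE ta) (negbTE tb) preimage_setT probability_setT.
rewrite Ea Eb => <-; congr (P _); apply/seteqP; split => [w [Aw Bw] t _|w Ew].
  by rewrite /E; case: ifP => [/eqP->|_] //; case: ifP => [/eqP->|].
by split; [rewrite -Ea; exact: Ew | rewrite -Eb; exact: Ew].
Qed.

Lemma grid_cell {R : realType} {x y del : R} :
  0 < del -> 0 <= x <= 1 -> `|x - y| <= del ->
  exists2 k : nat, (k < (Num.truncn del^-1).+1)%N &
    x \in `[k%:R * del, k.+1%:R * del] /\
    y \in `[(k%:R - 1) * del, (k%:R + 2) * del].
Proof.
move=> del0 /andP[x0 x1]; rewrite ler_norml => /andP[yx xy].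
have xdel0 : 0 <= x / del by rewrite divr_ge0 // ltW.
have /andP[kx xk] := truncn_itv xdel0.
exists (Num.truncn (x / del)).
  by rewrite ltnS le_truncn // -[leRHS]mul1r ler_wpM2r // invr_ge0 ltW.
rewrite ler_pdivlMr // in kx; rewrite ltr_pdivrMr // -natr1 in xk.
by rewrite !in_itv /= -natr1; split; apply/andP; split; lra.
Qed.

Lemma measure_bigsetU_le_const {R : realType} {d : measure_display}
    {T : measurableType d} (mu : {measure set T -> \bar R}) (n : nat)
    (p : pred nat) (A : nat -> set T) (B : R) :
  (forall i, p i -> measurable (A i)) ->
  (forall i, (i < n)%N -> p i -> (mu (A i) <= B%:E)%E) -> 0 <= B ->
  (mu (\big[setU/set0]_(i < n | p i) A i) <= (n%:R * B)%:E)%E.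
Proof.
move=> mA AB B0; rewrite big_mkcond /=.
have mA' i : (i < n)%N -> measurable (if p i then A i else set0).
  by move=> _; case: ifP => // /mA.
apply: le_trans (Boole_inequality mu mA') _.
apply: (le_trans (y := (\sum_(i < n) B%:E)%E)).
  apply: lee_sum => i _.
  by case: ifP => [/(AB _ (ltn_ord i))//|_]; rewrite measure0 lee_fin.
by rewrite sumEFin sumr_const card_ord mulr_natl.
Qed.

Lemma exprn_le_fact_expR {R : realType} (x : R) (p : nat) : 0 <= x ->
  x ^+ p <= p`!%:R * expR x.
Proof.
move=> x0; case: p => [|p]; first by rewrite expr0 mul1r -expR0 ler_expR.
have := expR_ge1Dxn p x0; set F := p.+1`!%:R => h.
have : x ^+ p.+1 / F <= expR x by lra.
by rewrite ler_pdivrMr ?ltr0n ?fact_gt0 // mulrC.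
Qed.

Lemma natrX_expR_le_geometric {R : realType} (lam : R) (n p : nat) : 0 < lam ->
  n%:R ^+ p * expR (- (lam * n%:R)) <=
    p`!%:R * (2 / lam) ^+ p * expR (- (lam / 2)) ^+ n.
Proof.
move=> lam0; set x := lam * n%:R / 2.
have x0 : 0 <= x by rewrite /x !mulr_ge0 // ltW.
have nE : n%:R = 2 / lam * x by rewrite /x; field; rewrite gt_eqF.
have E2 : expR (- (lam * n%:R)) = expR (- x) * expR (- x).
  by rewrite -expRD; congr expR; rewrite /x; field.
have Er : expR (- (lam / 2)) ^+ n = expR (- x).
  by rewrite -expRM_natr; congr expR; rewrite /x; field.
have key : x ^+ p * expR (- x) <= p`!%:R.
  by rewrite expRN ler_pdivrMr ?expR_gt0 //; exact: exprn_le_fact_expR.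
rewrite E2 Er nE exprMn.
have -> : (2 / lam) ^+ p * x ^+ p * (expR (- x) * expR (- x)) =
  (2 / lam) ^+ p * (x ^+ p * expR (- x)) * expR (- x) by ring.
apply: ler_wpM2r; first exact/ltW/expR_gt0.
rewrite [leRHS]mulrC; apply: ler_wpM2l key.
by rewrite exprn_ge0 // divr_ge0 // ltW.
Qed.

Lemma nneseries_geometric_lty {R : realType} (C r : R) : 0 <= C -> 0 < r < 1 ->
  (\sum_(n <oo) (C * r ^+ n)%:E < +oo)%E.
Proof.
move=> C0 /andP[r0 r1]; apply: (le_lt_trans (y := (C / (1 - r))%:E)); last exact: ltry.
apply: lime_le.
  by apply: is_cvg_nneseries => n _ _; rewrite lee_fin mulr_ge0 // exprn_ge0 // ltW.
apply: nearW => n; rewrite sumEFin lee_fin.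
by apply: geometric_le_lim => //; rewrite ger0_norm // ltW.
Qed.

Lemma ae_eventually_notin {R : realType} {d : measure_display} {T : measurableType d}
    (mu : {measure set T -> \bar R}) (F : (set T)^nat) :
  (forall n, measurable (F n)) -> (\sum_(n <oo) mu (F n) < +oo)%E ->
  {ae mu, forall w, \forall n \near \oo, ~ F n w}.
Proof.
move=> mF summable; exists (lim_sup_set F); split.
- apply: bigcap_measurable => // k _.
  by apply: bigcup_measurable => j _; exact: mF.
- exact: lim_sup_set_cvg0.
move=> w /= not_ev k _; apply: contrapT => notF; apply: not_ev.
by exists k => // n /= kn Fn; apply: notF; exists n.
Qed.

Definition close_pair {R : realType} {T : Type} (X : nat -> T -> R)
    (i j : nat) (del : R) : set T := [set w | `|X i w - X j w| <= del].

Definition close_pairs {R : realType} {T : Type} (X : nat -> T -> R)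
    (n : nat) (del : R) : set T :=
  \big[setU/set0]_(i < n) \big[setU/set0]_(j < n | j != i :> nat) close_pair X i j del.

Lemma close_pairsP {R : realType} {T : Type} (X : nat -> T -> R) (n i j : nat)
    (del : R) (w : T) :
  (i < n)%N -> (j < n)%N -> i != j -> `|X i w - X j w| <= del ->
  close_pairs X n del w.
Proof.
move=> i_lt j_lt ij close; rewrite /close_pairs (bigD1 (Ordinal i_lt)) //=.
by left; rewrite (bigD1 (Ordinal j_lt)) /= 1?eq_sym //; left.
Qed.

Section close_pairs.
Context {R : realType} {d : measure_display} {T : measurableType d}.
Context {P : probability T R} {X : nat -> T -> R} {f : R -> R} {M lam : R}.
Hypotheses (mX : forall k, measurable_fun setT (X k))
  (X_indep : mutually_independent P X)
  (X_density : forall k, has_density_01 P (X k) f)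
  (mf : measurable_fun setT f) (fM : forall x, 0 <= f x <= M)
  (lam_gt0 : 0 < lam).

Let M_ge0 : 0 <= M. Proof. by case/andP: (fM 0) => /le_trans; apply. Qed.

Let measurable_preimage k (A : set R) : measurable A -> measurable (X k @^-1` A).
Proof. by move=> mA; rewrite -[_ @^-1` _]setTI; exact: mX. Qed.

Lemma measurable_close_pair (i j : nat) (del : R) : measurable (close_pair X i j del).
Proof.
have -> : close_pair X i j del =
    (fun w => X i w - X j w) @^-1` `[- del, del].
  by apply/seteqP; split => w /=; rewrite in_itv /= -ler_norml.
rewrite -[_ @^-1` _]setTI.
by apply: (measurable_funB (mX _) (mX _)) => //; exact: measurable_itv.
Qed.

Lemma measurable_close_pairs (n : nat) (del : R) : measurable (close_pairs X n del).
Proof.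
by apply: bigsetU_measurable => i _; apply: bigsetU_measurable => j _;
  exact: measurable_close_pair.
Qed.

Let cell (i j k : nat) (del : R) : set T :=
  X i @^-1` `[k%:R * del, k.+1%:R * del] `&`
  X j @^-1` `[(k%:R - 1) * del, (k%:R + 2) * del].

Lemma prob_cell_le (i j k : nat) (del : R) : i != j -> 0 < del ->
  (P (cell i j k del) <= (3 * M ^+ 2 * del ^+ 2)%:E)%E.
Proof.
move=> ij del0; rewrite /cell mutually_independent_pair //; try exact: measurable_itv.
have -> : 3 * M ^+ 2 * del ^+ 2 = M * del * (M * (3 * del)) by ring.
rewrite EFinM; apply: lee_pmul => //.
- apply: (le_trans (prob_itv_le (X_density i) mf fM _ _ _)); first lra.
  by rewrite lee_fin -natr1; apply: ler_wpM2l => //; lra.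
- apply: (le_trans (prob_itv_le (X_density j) mf fM _ _ _)); first lra.
  by rewrite lee_fin; apply: ler_wpM2l => //; lra.
Qed.

Lemma prob_close_pair_le (i j : nat) (del : R) : i != j -> 0 < del ->
  (P (close_pair X i j del) <= (3 * M ^+ 2 * (del + del ^+ 2))%:E)%E.
Proof.
move=> ij del0.
pose K := (Num.truncn del^-1).+1.
have mcell k : measurable (cell i j k del).
  by apply: measurableI; apply: measurable_preimage; exact: measurable_itv.
have mcells : measurable (\big[setU/set0]_(k < K) cell i j k del).
  exact: bigsetU_measurable.
have mout : measurable (X i @^-1` ~` `[0%R, 1%R]).
  by apply/measurable_preimage/measurableC; exact: measurable_itv.
have cover : close_pair X i j del `<=`
    \big[setU/set0]_(k < K) cell i j k del `|` X i @^-1` ~` `[0%R, 1%R].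
  move=> w /= close; have [x01|] := boolP (X i w \in `[0%R, 1%R]); last by right.
  rewrite in_itv /= in x01; have [k kK [xk yk]] := grid_cell del0 x01 close.
  by left; rewrite -(bigcup_mkord K (fun k => cell i j k del)); exists k.
apply: le_trans (le_measure _ _ _ cover) _; rewrite ?inE //.
- exact: measurable_close_pair.
- exact: measurableU.
rewrite [leLHS](_ : _ = P (\big[setU/set0]_(k < K) cell i j k del)); last first.
  exact: measureU0 mcells mout (prob_notin01 (X_density i)).
have cell_ge0 : 0 <= 3 * M ^+ 2 * del ^+ 2 by rewrite !mulr_ge0 // ltW.
apply: (le_trans (measure_bigsetU_le_const _ _ xpredT _ _ _
  (fun k _ _ => prob_cell_le _ _ k _ ij del0) cell_ge0)) => //.
have K_le : K%:R <= del^-1 + 1 by rewrite -natr1 lerD2r truncn_le invr_ge0 ltW.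
rewrite lee_fin; apply: le_trans (ler_wpM2r cell_ge0 K_le) _.
rewrite [leRHS](_ : _ = (del^-1 + 1) * (3 * M ^+ 2 * del ^+ 2)) //.
by field; rewrite gt_eqF.
Qed.

Lemma prob_close_pairs_le (n : nat) (del : R) : 0 < del ->
  (P (close_pairs X n del) <= (n%:R ^+ 2 * (3 * M ^+ 2 * (del + del ^+ 2)))%:E)%E.
Proof.
move=> del0; have B0 : 0 <= 3 * M ^+ 2 * (del + del ^+ 2).
  by rewrite !mulr_ge0 ?addr_ge0 ?exprn_ge0 // ltW.
rewrite /close_pairs expr2 -mulrA.
apply: (measure_bigsetU_le_const _ _ xpredT
  (fun i : nat => \big[setU/set0]_(j < n | j != i :> nat) close_pair X i j del)) => //.
- by move=> i _; apply: bigsetU_measurable => j _; exact: measurable_close_pair.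
- move=> i _ _.
  apply: (measure_bigsetU_le_const _ _ (predC1 i) (close_pair X i ^~ del)) => //.
    by move=> j _; exact: measurable_close_pair.
  by move=> j _ ji; apply: prob_close_pair_le; rewrite // eq_sym.
- exact: mulr_ge0.
Qed.

Lemma prob_close_pairs_le_geometric (m n : nat) :
  (P (close_pairs X (2 * n ^ 2) (m.+1%:R * expR (- (lam * n%:R)))) <=
    (12 * M ^+ 2 * (m.+1%:R + m.+1%:R ^+ 2) * (4`!%:R * (2 / lam) ^+ 4) *
     expR (- (lam / 2)) ^+ n)%:E)%E.
Proof.
set E := expR _; set k : R := m.+1%:R.
have E0 : 0 < E by exact: expR_gt0.
have E1 : E <= 1 by rewrite expR_le1 oppr_le0 mulr_ge0 // ltW.
have k0 : 0 < k by rewrite ltr0n.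
apply: le_trans (prob_close_pairs_le _ _ _) _; first exact: mulr_gt0.
rewrite lee_fin natrM natrX.
have M2 : 0 <= 3 * M ^+ 2 by rewrite mulr_ge0 ?sqr_ge0.
have del_le : k * E + (k * E) ^+ 2 <= (k + k ^+ 2) * E.
  rewrite exprMn mulrDl lerD2l; apply: ler_wpM2l; first exact/exprn_ge0/ltW.
  by rewrite expr2 ler_piMr // ltW.
apply: (le_trans (y := (2 * n%:R ^+ 2) ^+ 2 * (3 * M ^+ 2 * ((k + k ^+ 2) * E)))).
  apply: ler_wpM2l; first by rewrite exprn_ge0 ?mulr_ge0 ?exprn_ge0.
  exact: ler_wpM2l.
have -> : (2 * n%:R ^+ 2) ^+ 2 * (3 * M ^+ 2 * ((k + k ^+ 2) * E)) =
  12 * M ^+ 2 * (k + k ^+ 2) * (n%:R ^+ 4 * E) by ring.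
rewrite -[leRHS]mulrA; apply: ler_wpM2l; last exact: natrX_expR_le_geometric.
by apply: mulr_ge0; [exact: mulr_ge0 (sqr_ge0 M) | rewrite addr_ge0 ?exprn_ge0 ?ltW].
Qed.

Lemma ae_eventually_no_close_pairs :
  {ae P, forall w (m : nat), \forall n \near \oo,
    ~ close_pairs X (2 * n ^ 2) (m.+1%:R * expR (- (lam * n%:R))) w}.
Proof.
apply: ae_foralln => m; apply: ae_eventually_notin => [n|].
  exact: measurable_close_pairs.
apply: le_lt_trans (nneseries_geometric_lty _ _ _ _).
- apply: lee_nneseries => [n _ _|n _]; first exact: measure_ge0.
  exact: prob_close_pairs_le_geometric.
- apply: mulr_ge0; last by rewrite mulr_ge0 // exprn_ge0 // divr_ge0 // ltW.
  by apply: mulr_ge0; [exact: mulr_ge0 (sqr_ge0 M) | rewrite addr_ge0 ?exprn_ge0].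
- by rewrite expR_gt0 expR_lt1 oppr_lt0 divr_gt0.
Qed.

End close_pairs.

Lemma exp2_qn_le {R : realType} (n : nat) : (2 <= n)%N -> (2 ^ qn (R := R) n <= n)%N.
Proof.
move=> n2; rewrite /qn; set y := ln (ln (n%:R : R)) / ln 2.
have ln2 : 0 < ln (2 : R) by rewrite ln_gt0 // ltr1n.
have lnn : 0 < ln (n%:R : R) by rewrite ln_gt0 // ltr1n.
have [y_lt0|y_ge0] := ltP y 0.
  by rewrite truncn_floor ifN ?expn0 ?(leq_trans _ n2) // -ltNge.
have exp2_le_ln : (2 : R) ^+ Num.truncn y <= ln (n%:R : R).
  rewrite -[X in X ^+ _](@lnK R 2) ?posrE // -expRM_natl.
  rewrite -[leRHS](@lnK R (ln n%:R)) ?posrE // ler_expR.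
  have -> : ln (ln (n%:R : R)) = y * ln 2 by rewrite /y mulfVK // gt_eqF.
  by rewrite ler_pM2r // truncn_le.
rewrite -(ler_nat R) natrX; apply/ltW/(le_lt_trans exp2_le_ln).
by rewrite ln_sublinear // ltr0n (leq_trans _ n2).
Qed.

Lemma inAq_bounds {n q i : nat} : (2 ^ q <= n)%N -> inAq n q i -> (n <= i < 2 * n ^ 2)%N.
Proof.
move=> q_le [k [kq /andP[lo hi]]].
have : (2 ^ k <= 2 ^ q)%N by rewrite leq_pexp2l.
have : (1 <= 2 ^ k)%N by rewrite expn_gt0.
by move=> *; apply/andP; split; nia.
Qed.

Lemma lk_le_expR {R : realType} (lam : R) (n i : nat) : 0 < lam -> (n <= i)%N ->
  lk lam i <= expR (- (lam * n%:R)).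
Proof. by move=> lam0 ni; rewrite /lk ler_expR lerN2 ler_pM2l // ler_nat. Qed.

Lemma half_sum_div_lt {R : realType} (a b E D k eps : R) : 0 < E -> 0 < k ->
  a <= E -> b <= E -> k * E < D -> 1 < eps * k -> (a + b) / (2 * D) < eps.
Proof.
move=> E0 k0 aE bE kED epsk; have D0 : 0 < D by apply: lt_trans kED; exact: mulr_gt0.
rewrite ltr_pdivrMr ?mulr_gt0 //; nra.
Qed.

Theorem lemma2p2 (R : realType) (d : measure_display) (T : measurableType d)
  (P : probability T R) (c : nat -> T -> R) (f : R -> R) (M lam : R) :
  (forall k, measurable_fun setT (c k)) ->
  mutually_independent P (fun k => c k.+1) ->
  (forall k, (1 <= k)%N -> has_density_01 P (c k) f) ->
  measurable_fun setT f ->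
  (forall x, 0 <= f x <= M) ->
  {ae lebesgue_measure, forall x : R, 0 <= x <= 1 -> 0 < f x} ->
  0 < lam ->
  {ae P, forall w : T, forall eps : R, 0 < eps ->
     exists N : nat, forall n : nat, (N <= n)%N ->
       forall i j : nat, inAq n (qn (R := R) n) i -> inAq n (qn (R := R) n) j ->
         i <> j ->
         (lk lam i + lk lam j) / (2 * `|c i w - c j w|) < eps /\ c i w <> c j w}.
Proof.
move=> mc c_indep c_density mf fM _ lam_gt0.
have X_density k : has_density_01 P (c k.+1) f by exact: c_density.
have := ae_eventually_no_close_pairs (fun k => mc k.+1) c_indep X_density mf fM lam_gt0.
apply: filterS => w far eps eps_gt0.
set m := Num.truncn eps^-1.
have eps_m : 1 < eps * m.+1%:R by rewrite -ltr_pdivrMl // mulr1 truncnS_gt.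
have [N _ farN] := far m.
exists (maxn N 2) => n; rewrite geq_max => /andP[Nn n2] i j Ai Aj /eqP ij.
have q_le := @exp2_qn_le R n n2.
have /andP[ni i_lt] := inAq_bounds q_le Ai.
have /andP[nj j_lt] := inAq_bounds q_le Aj.
have gap : m.+1%:R * expR (- (lam * n%:R)) < `|c i w - c j w|.
  rewrite ltNge; apply/negP => close; apply: (farN n Nn).
  have [i_gt0 j_gt0] : (0 < i)%N /\ (0 < j)%N by split; lia.
  apply: (@close_pairsP _ _ _ _ i.-1 j.-1); rewrite ?prednK //.
  - lia.
  - lia.
  - apply/eqP; lia.
have gap_gt0 : 0 < `|c i w - c j w|.
  by apply: le_lt_trans gap; rewrite mulr_ge0 ?ltW ?expR_gt0.
split; last by move=> cij; move: gap_gt0; rewrite cij subrr normr0 ltxx.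
by apply: half_sum_div_lt gap eps_m; rewrite ?expR_gt0 ?ltr0n ?lk_le_expR.
Qed.
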